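(* Let $\mathcal{S}$ and $\mathcal{A}$ be finite sets and consider a Markov decision process in which, for each $(s,a)\in\mathcal{S}\times\mathcal{A}$, the pair (random reward, next state) $(\tilde r(s,a),\tilde s')$ has joint law $P(\cdot,\cdot\mid s,a)$, with $\tilde r(s,a)\in[0,1]$ almost surely and $\tilde r(s,a)$ having a bounded density for every $(s,a)$. Let $\gamma\in(0,1)$, let $\rho$ be a coherent risk measure, and let $d$ be a probability distribution on $\mathcal{S}$ with $0<d(s)\le 1$ for all $s$. Consider softmax policies $\pi_\theta(a\mid s)=\exp(\theta(s,a))/\sum_{b\in\mathcal{A}}\exp(\theta(s,b))$, $\theta\in\mathbb{R}^{\mathcal{S}\times\mathcal{A}}$, and the iteration $$\theta_{t+1}=\theta_t+\eta\,\nabla_\theta\Big[\sum_{s} d(s)\sum_a \pi_\theta(a\mid s)\,Q^{\pi_t}(s,a)\Big]\Big|_{\theta=\theta_t},$$ where $\pi_t:=\pi_{\theta_t}$ and $Q^{\pi_t}$ is held fixed (not differentiated); equivalently $\theta_{t+1}(s,a)=\theta_t(s,a)+\eta\, d(s)\pi_t(a\mid s)\big(Q^{\pi_t}(s,a)-V^{\pi_t}(s)\big)$. If $\eta\le(1-\gamma)/5$, then for every $t$ and all $(s,a)\in\mathcal{S}\times\mathcal{A}$, $$Q^{\pi_{t+1}}(s,a)\ge Q^{\pi_t}(s,a)\quad\text{and}\quad V^{\pi_{t+1}}(s)\ge V^{\pi_t}(s).$$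
   Context: A risk measure $\rho$ maps a real random variable (a return) to $\mathbb{R}\cup\{\pm\infty\}$. It is coherent if for all random variables $\tilde x,\tilde y$: (concavity) $\rho(\lambda\tilde x+(1-\lambda)\tilde y)\ge\lambda\rho(\tilde x)+(1-\lambda)\rho(\tilde y)$ for $\lambda\in[0,1]$; (monotonicity) $\tilde x\le\tilde y$ implies $\rho(\tilde x)\le\rho(\tilde y)$; (translation invariance) $\rho(\tilde x+c)=\rho(\tilde x)+c$ for $c\in\mathbb{R}$; (positive homogeneity) $\rho(\lambda\tilde x)=\lambda\rho(\tilde x)$ for $\lambda\ge0$. Examples are the $\alpha$-expectile and the left-tail $\alpha$-CVaR. For a stochastic Markov policy $\pi$, the Bellman operator is $(\mathcal{T}^\pi Q)(s,a)=\rho\big(\tilde r(s,a)+\gamma\sum_{a'}\pi(a'\mid\tilde s')Q(\tilde s',a')\big)$, where $\rho$ is taken over the joint randomness of $(\tilde r(s,a),\tilde s')\sim P(\cdot,\cdot\mid s,a)$. $Q^\pi$ denotes the unique fixed point of $\mathcal{T}^\pi$ (the dynamic-risk action-value function of $\pi$), and $V^\pi(s)=\sum_a\pi(a\mid s)Q^\pi(s,a)$. *)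

From HB Require Import structures.
From mathcomp Require Import all_boot all_order all_algebra.
From mathcomp Require Import all_classical all_reals all_analysis.
Set Implicit Arguments. Unset Strict Implicit. Unset Printing Implicit Defensive.
Import Order.TTheory GRing.Theory Num.Theory.
Local Open Scope classical_set_scope.
Local Open Scope ring_scope.

Section Defs.
Variables (R : realType) (S A : finType).
Variables (d0 : measure_display) (Omega : measurableType d0).

Definition softmax (theta : S -> A -> R) (s : S) (a : A) : R :=
  expR (theta s a) / \sum_(b : A) expR (theta s b).

Definition Vof (pi : S -> A -> R) (Q : S -> A -> R) (s : S) : R :=
  \sum_(a : A) pi s a * Q s a.

Definition random_var (X : Omega -> R) := measurable_fun setT X.

Definition coherent (rho : (Omega -> R) -> \bar R) : Prop :=
  [/\ (forall X Y (l : R), random_var X -> random_var Y -> 0 <= l <= 1 ->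
        (l%:E * rho X + (1 - l)%:E * rho Y <= rho (fun w => (l * X w + (1 - l) * Y w)%R))%E),
      (forall X Y, random_var X -> random_var Y -> (forall w, X w <= Y w) ->
        (rho X <= rho Y)%E),
      (forall X (c : R), random_var X -> rho (fun w => (X w + c)%R) = (rho X + c%:E)%E) &
      (forall X (l : R), random_var X -> 0 <= l -> rho (fun w => (l * X w)%R) = (l%:E * rho X)%E)].

(* (T^pi Q)(s,a) = rho( r(s,a) + gamma * sum_a' pi(a'|s') Q(s',a') ),
   the randomness (r(s,a), s') ~ P(.,.|s,a) being realized as (rt s a, st s a) *)
Definition bellman (rho : (Omega -> R) -> \bar R) (gamma : R)
  (rt : S -> A -> Omega -> R) (st : S -> A -> Omega -> S)
  (pi : S -> A -> R) (Q : S -> A -> R) (s : S) (a : A) : \bar R :=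
  rho (fun w => rt s a w + gamma * \sum_(a' : A) pi (st s a w) a' * Q (st s a w) a').

Definition is_Qpi rho gamma rt st (pi : S -> A -> R) (Q : S -> A -> R) : Prop :=
  forall s a, (Q s a)%:E = bellman rho gamma rt st pi Q s a.

Definition bounded_density (P : probability Omega R) (X : Omega -> R) : Prop :=
  exists f : R -> R, exists M : R,
    measurable_fun setT f /\ (forall x, 0 <= f x <= M) /\
    forall B : set R, measurable B ->
      P (X @^-1` B) = (\int[@lebesgue_measure R]_(x in B) (f x)%:E)%E.

End Defs.

From HB Require Import structures.
From mathcomp Require Import all_boot all_order all_algebra.
From mathcomp Require Import all_classical all_reals all_analysis.
From mathcomp Require Import ring.
Set Implicit Arguments. Unset Strict Implicit. Unset Printing Implicit Defensive.
Import Order.TTheory GRing.Theory Num.Theory.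
Local Open Scope classical_set_scope.
Local Open Scope ring_scope.

(** The softmax step moves probability mass towards actions with positive
    advantage [Q s a - V s], so the old [Q] evaluated under the new policy is
    at least [V]: a one-step policy improvement.  Write [c] for the largest
    shift with [Q_t + c <= Q_{t+1}].  Monotonicity and translation invariance
    of [rho] turn the improvement into [Q_t + gamma c <= Q_{t+1}] at the
    fixed points, and minimality of [c] then forces [c <= gamma c], i.e.
    [c >= 0]. *)

Lemma le_expR_mul_self (R : realType) (k x : R) :
  0 <= k -> x <= expR (k * x) * x.
Proof.
move=> k_ge0; have [x_ge0|x_lt0] := leP 0 x.
  rewrite -{1}(mul1r x) ler_wpM2r // (le_trans _ (expR_ge1Dx _)) // lerDl.
  exact: mulr_ge0.
rewrite -{1}(mul1r x) ler_wnM2r ?(ltW x_lt0) //.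
by rewrite expR_le1 mulr_ge0_le0 // ltW.
Qed.

Lemma le_of_shift_contraction (R : realFieldType) (X : finType) (f g : X -> R)
    (k : R) :
  k < 1 ->
  (forall c, (forall x, f x + c <= g x) -> forall x, f x + k * c <= g x) ->
  forall x, f x <= g x.
Proof.
move=> k_lt1 contract x.
case: (arg_minP (fun y => g y - f y) (erefl : xpredT x)) => p _ p_min.
set c := g p - f p in p_min.
have shift y : f y + c <= g y by rewrite -lerBrDl p_min.
have c_ge0 : 0 <= c.
  have := contract c shift p; rewrite -lerBrDl -/c => kc_le_c.
  have : 0 <= (1 - k) * c by rewrite mulrBl mul1r subr_ge0.
  by rewrite pmulr_rge0 // subr_gt0.
by apply: le_trans (shift x); rewrite lerDl.
Qed.

Lemma measurable_fun_fin_valued (R : realType) (S : finType)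
    (d : measure_display) (T : measurableType d) (f : T -> S) (g : S -> R) :
  (forall s, measurable (f @^-1` [set s])) -> measurable_fun setT (g \o f).
Proof.
move=> f_meas.
have -> : g \o f = fun w => \sum_(s : S) g s * \1_(f @^-1` [set s]) w.
  apply/funext => w /=; rewrite (bigD1 (f w)) //= big1 ?addr0.
    by rewrite indicE mem_set ?mulr1.
  move=> s /negPf fw_neq; rewrite indicE memNset ?mulr0 // => /eqP.
  by rewrite eq_sym fw_neq.
apply: measurable_sum => s.
apply: measurable_realfun.measurable_funM; first exact: measurable_cst.
exact: measurable_realfun.measurable_indic.
Qed.

Section Softmax.
Variables (R : realType) (S A : finType).
Implicit Types (th Q : S -> A -> R).

Lemma sum_expR_gt0 (f : A -> R) (a0 : A) : 0 < \sum_(b : A) expR (f b).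
Proof.
rewrite (bigD1 a0) //= ltr_pwDl ?expR_gt0 //.
by apply: sumr_ge0 => b _; rewrite ltW ?expR_gt0.
Qed.

Lemma softmax_ge0 th s a : 0 <= softmax th s a.
Proof.
by rewrite /softmax divr_ge0 ?sumr_ge0 // => *; rewrite ltW ?expR_gt0.
Qed.

Lemma sum_softmax (a0 : A) th s : \sum_(a : A) softmax th s a = 1.
Proof. by rewrite /softmax -mulr_suml mulfV // gt_eqF ?(sum_expR_gt0 _ a0). Qed.

Lemma Vof_addr (a0 : A) th Q s c :
  Vof (softmax th) Q s + c = Vof (softmax th) (fun s' a => Q s' a + c) s.
Proof.
rewrite /Vof; under [RHS]eq_bigr do rewrite mulrDr.
by rewrite big_split /= -mulr_suml (sum_softmax a0) mul1r.
Qed.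

Lemma le_Vof th Q Q' s : (forall a, Q s a <= Q' s a) ->
  Vof (softmax th) Q s <= Vof (softmax th) Q' s.
Proof.
by move=> le_Q; apply: ler_sum => a _; rewrite ler_wpM2l ?softmax_ge0.
Qed.

Lemma softmax_shift th th' s (delta : A -> R) a :
  (forall b, th' s b = th s b + delta b) ->
  softmax th' s a =
    softmax th s a * expR (delta a) /
      \sum_(b : A) softmax th s b * expR (delta b).
Proof.
move=> th'E; rewrite /softmax.
set Z := \sum_(b : A) expR (th s b); set Z' := \sum_(b : A) expR (th' s b).
have Z_neq0 : Z != 0 by rewrite gt_eqF ?(sum_expR_gt0 _ a).
have Z'_neq0 : Z' != 0 by rewrite gt_eqF ?(sum_expR_gt0 _ a).
have -> : \sum_(b : A) expR (th s b) / Z * expR (delta b) = Z' / Z.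
  by rewrite mulr_suml; apply: eq_bigr => b _; rewrite th'E expRD mulrAC.
by rewrite th'E expRD; field; apply/andP.
Qed.

Lemma Vof_softmax_step th th' Q s c : 0 <= c ->
  (forall a, th' s a =
     th s a + c * softmax th s a * (Q s a - Vof (softmax th) Q s)) ->
  Vof (softmax th) Q s <= Vof (softmax th') Q s.
Proof.
move=> c_ge0 th'E.
have [a0 _|A0] := pickP (@predT A); last first.
  by rewrite /Vof !big1 // => a; have := A0 a.
set V := Vof (softmax th) Q s; set adv := fun a => Q s a - V.
have Vof_subV th'' :
    Vof (softmax th'') Q s - V = \sum_a softmax th'' s a * adv a.
  exact: Vof_addr a0 th'' Q s (- V).
have sum_adv0 : \sum_a softmax th s a * adv a = 0 by rewrite -Vof_subV subrr.
rewrite -subr_ge0 Vof_subV.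
under eq_bigr do rewrite (softmax_shift _ th'E).
set W := \sum_(b : A) softmax th s b * expR _.
have -> :
    \sum_a softmax th s a * expR (c * softmax th s a * adv a) / W * adv a =
    W^-1 * \sum_a softmax th s a * (expR (c * softmax th s a * adv a) * adv a).
  by rewrite mulr_sumr; apply: eq_bigr => a _; ring.
apply: mulr_ge0.
  rewrite invr_ge0 sumr_ge0 // => a _.
  by rewrite mulr_ge0 ?softmax_ge0 ?expR_ge0.
rewrite -{1}sum_adv0; apply: ler_sum => a _.
by rewrite ler_wpM2l ?softmax_ge0 // le_expR_mul_self // mulr_ge0 ?softmax_ge0.
Qed.

End Softmax.

Section BellmanShift.
Variables (R : realType) (S A : finType).
Variables (d : measure_display) (Omega : measurableType d).
Variables (rho : (Omega -> R) -> \bar R) (gamma : R).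
Variables (rt : S -> A -> Omega -> R) (st : S -> A -> Omega -> S).
Hypothesis rho_monotone : forall X Y, random_var X -> random_var Y ->
  (forall w, X w <= Y w) -> (rho X <= rho Y)%E.
Hypothesis rho_translation : forall X c, random_var X ->
  rho (fun w => X w + c) = (rho X + c%:E)%E.
Hypothesis rt_meas : forall s a, measurable_fun setT (rt s a).
Hypothesis st_meas : forall s a s', measurable (st s a @^-1` [set s']).
Hypothesis gamma_ge0 : 0 <= gamma.
Implicit Types (th pi Q : S -> A -> R).

Lemma random_var_bellman_target pi Q s a :
  random_var (fun w => rt s a w + gamma * Vof pi Q (st s a w)).
Proof.
apply: measurable_realfun.measurable_funD => //.
apply: measurable_realfun.measurable_funM; first exact: measurable_cst.
exact: measurable_fun_fin_valued (Vof pi Q) (st_meas s a).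
Qed.

Lemma bellman_shift_le pi pi' Q Q' c s a :
  (forall s', Vof pi Q s' + c <= Vof pi' Q' s') ->
  (bellman rho gamma rt st pi Q s a + (gamma * c)%:E <=
     bellman rho gamma rt st pi' Q' s a)%E.
Proof.
move=> le_V; rewrite /bellman -rho_translation;
  last exact: random_var_bellman_target.
apply: rho_monotone; last first.
  move=> w; rewrite -addrA lerD2l -mulrDr.
  by apply: ler_wpM2l => //; exact: le_V.
- exact: random_var_bellman_target.
- apply: measurable_realfun.measurable_funD; last exact: measurable_cst.
  exact: random_var_bellman_target.
Qed.

Lemma is_Qpi_shift c th th' Q Q' :
  is_Qpi rho gamma rt st (softmax th) Q ->
  is_Qpi rho gamma rt st (softmax th') Q' ->
  (forall s, Vof (softmax th) Q s <= Vof (softmax th') Q s) ->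
  (forall s a, Q s a + c <= Q' s a) -> forall s a, Q s a + gamma * c <= Q' s a.
Proof.
move=> QE Q'E improve shift s a.
rewrite -lee_fin EFinD QE Q'E; apply: bellman_shift_le => s'.
apply: le_trans (lerD (improve s') (lexx c)) _.
by rewrite (Vof_addr a); apply: le_Vof.
Qed.

End BellmanShift.

Theorem lemma1 (R : realType) (S A : finType)
  (d0 : measure_display) (Omega : measurableType d0) (P : probability Omega R)
  (rt : S -> A -> Omega -> R) (st : S -> A -> Omega -> S)
  (rho : (Omega -> R) -> \bar R) (gamma eta : R) (d : S -> R)
  (theta : nat -> S -> A -> R) (Q : nat -> S -> A -> R) :
  (forall s a, measurable_fun setT (rt s a)) ->
  (forall s a s', measurable (st s a @^-1` [set s'])) ->
  (forall s a, {ae P, forall w, 0 <= rt s a w <= 1}) ->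
  (forall s a, bounded_density P (rt s a)) ->
  0 < gamma < 1 ->
  coherent rho ->
  (forall s, 0 < d s <= 1) -> \sum_(s : S) d s = 1 ->
  (forall t, is_Qpi rho gamma rt st (softmax (theta t)) (Q t)) ->
  (forall t s a, theta t.+1 s a = theta t s a +
      eta * d s * softmax (theta t) s a *
        (Q t s a - Vof (softmax (theta t)) (Q t) s)) ->
  0 < eta -> eta <= (1 - gamma) / 5 ->
  forall t, (forall s a, Q t s a <= Q t.+1 s a) /\
            (forall s, Vof (softmax (theta t)) (Q t) s <=
                       Vof (softmax (theta t.+1)) (Q t.+1) s).
Proof.
move=> rt_meas st_meas _ _ /andP[gamma_gt0 gamma_lt1] [_ rho_mono rho_trans _].
move=> d_bounds _ QE thetaE eta_gt0 _ t.
have step_ge0 s : 0 <= eta * d s.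
  by case/andP: (d_bounds s) => d_gt0 _; rewrite mulr_ge0 ?ltW.
have improve s :
    Vof (softmax (theta t)) (Q t) s <= Vof (softmax (theta t.+1)) (Q t) s.
  exact: Vof_softmax_step (step_ge0 s) (thetaE t s).
have Q_mono s a : Q t s a <= Q t.+1 s a.
  apply: (le_of_shift_contraction (f := fun p : S * A => Q t p.1 p.2)
    (g := fun p => Q t.+1 p.1 p.2) gamma_lt1 _ (s, a)) => c shift [s' a'] /=.
  exact: (is_Qpi_shift rho_mono rho_trans rt_meas st_meas (ltW gamma_gt0)
    (QE t) (QE t.+1) improve (c := c) (fun s a => shift (s, a))).
split=> // s; exact: le_trans (improve s) (le_Vof _ (Q_mono s)).
Qed.
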